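(* Let $k\ge 1$ be an integer and let $r_0,\dots,r_k$ be distinct integers. Then there is an integer $M\ge 1$ such that, for each $\xi\in\mathbb{R}$, there exists at least one index $i\in\{0,1,\dots,k\}$ with $r_i\neq\xi$ for which the point $\xi_i=1/(M(\xi-r_i))$ satisfies \[ \omega^{\mathrm{lead}}_k(\xi_i)=\omega_k(\xi_i)=\omega_k(\xi). \]
   Context: For a polynomial $P\in\mathbb{Z}[x]$, $\|P\|$ denotes the largest absolute value of its coefficients, and $c_k(P)$ denotes the coefficient of $x^k$ in $P$. For $\xi\in\mathbb{R}$ and an integer $n\ge 1$, $\omega_n(\xi)$ is the supremum of all $\omega\in\mathbb{R}$ for which there exist infinitely many non-zero polynomials $P\in\mathbb{Z}[x]$ of degree at most $n$ with $|P(\xi)|\le\|P\|^{-\omega}$. The quantity $\omega^{\mathrm{lead}}_k(\xi)$ is defined in the same way as $\omega_k(\xi)$, except that one restricts to non-zero polynomials $P\in\mathbb{Z}[x]$ of degree at most $k$ satisfying $|c_k(P)|=\|P\|$. *)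

From HB Require Import structures.
From mathcomp Require Import all_boot all_order all_algebra.
From mathcomp Require Import all_classical all_reals all_analysis.
Set Implicit Arguments. Unset Strict Implicit. Unset Printing Implicit Defensive.
Import Order.TTheory GRing.Theory Num.Theory.
Local Open Scope classical_set_scope.
Local Open Scope ring_scope.

Definition polnorm (P : {poly int}) : nat := \max_(i < size P) absz (nth 0%R P i).

Definition omega_set (R : realType) (lead : bool) (n : nat) (xi : R) : set R :=
  [set w : R | ~ finite_set
     [set P : {poly int} | [/\ P != 0, (size P <= n.+1)%N,
        (lead -> absz (nth 0%R P n) = polnorm P) &
        `|(map_poly (fun z : int => z%:~R : R) P).[xi]|
           <= ((polnorm P)%:R : R) `^ (- w)]]].

Definition omega (R : realType) (n : nat) (xi : R) : \bar R :=
  ereal_sup (EFin @` omega_set false n xi).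

Definition omega_lead (R : realType) (n : nat) (xi : R) : \bar R :=
  ereal_sup (EFin @` omega_set true n xi).

From HB Require Import structures.
From mathcomp Require Import all_boot all_order all_algebra.
From mathcomp Require Import all_classical all_reals all_analysis.
From mathcomp Require Import ring.
Set Implicit Arguments. Unset Strict Implicit. Unset Printing Implicit Defensive.
Import Order.TTheory GRing.Theory Num.Theory.
Local Open Scope ring_scope.
Local Open Scope classical_set_scope.

(** Put xi_i = 1/(M (xi - r_i)). The substitution x = r_i + 1/(M y), made polynomial by the
   factor (M y)^k, sends P of degree at most k to T P with T P(xi_i) = (xi - r_i)^(-k) P(xi) and
   top coefficient M^k P(r_i); the inverse substitution sends Q to S Q with
   S Q(xi) = (M (xi - r_i))^k Q(xi_i), and T (S Q) = M^k Q. Both maps distort heights by bounded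
   factors, so S gives omega_k(xi_i) <= omega_k(xi), while T carries approximations of xi to
   approximations of xi_i.
   As the nodes r_0, ..., r_k are distinct, Lagrange interpolation bounds H(P) by L |P(r_i)| for
   some i. For such P, once M exceeds L times the height distortion of the substitution at r_i,
   the top coefficient of T P dominates the others, so T P also counts for omega^lead_k(xi_i).
   There are finitely many nodes and the sets of approximations shrink as the exponent grows,
   so a single node serves for every exponent: omega_k(xi) <= omega^lead_k(xi_i) <= omega_k(xi_i).
   Finally xi <> r_i: at an integer point good approximations vanish, so none is dominated there. *)

Lemma ereal_sup_le_of_below (R : realType) (A B : set R) :
  (forall w, A w -> forall w', w' < w -> B w') ->
  (ereal_sup (EFin @` A) <= ereal_sup (EFin @` B))%E.
Proof.
move=> AB; apply/ereal_supP => _ [w Aw <-]; apply/lee_subgt0Pr => e e0.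
by apply: ereal_sup_ubound; exists (w - e) => //; apply: (AB w Aw); rewrite gtrBl.
Qed.

Lemma infinite_cover_uniform_part (T : Type) (I : finType) d (W : orderType d) (i0 : I)
    (A : W -> set T) (B : I -> set T) (S : set W) :
  (forall w w', (w' <= w)%O -> A w `<=` A w') -> (forall w, A w `<=` \bigcup_i B i) ->
  (forall w, S w -> ~ finite_set (A w)) ->
  exists i, forall w, S w -> ~ finite_set (A w `&` B i).
Proof.
move=> A_anti AB Ainf.
have some_part w : S w -> exists i, ~ finite_set (A w `&` B i).
  move=> Sw; apply: contrapT => all_fin; apply: (Ainf w Sw).
  apply: (@sub_finite_set _ _ (\bigcup_(i in setT) (A w `&` B i))).
    by move=> x Ax; have [i _ Bix] := AB w x Ax; exists i.
  apply: bigcup_finite; first exact: finite_finset.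
  by move=> i _; apply: contrapT => ABi; apply: all_fin; exists i.
apply: contrapT => no_part.
have {}no_part i : exists w, S w /\ finite_set (A w `&` B i).
  apply: contrapT => i_part; apply: no_part; exists i => w Sw ABfin.
  by apply: i_part; exists w.
have [wf wfP] := choice no_part.
case: (@arg_maxP _ _ _ i0 xpredT wf isT) => imax _ wf_le.
have [i ABinf] := some_part _ (wfP imax).1; apply: ABinf.
apply: sub_finite_set (wfP i).2 => x [Ax Bx]; split => //.
exact: A_anti (wf_le i isT) _ Ax.
Qed.

Lemma powR_ge_min (R : realType) (a b t e : R) : 0 < a -> a <= t <= b ->
  Num.min (a `^ e) (b `^ e) <= t `^ e.
Proof.
move=> a0 /andP[a_le_t t_le_b]; have t0 := lt_le_trans a0 a_le_t.
have [e0|e0] := leP 0 e.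
  by rewrite ge_min (ge0_ler_powR e0) // nnegrE ltW // (lt_le_trans a0).
have b0 : 0 < b := lt_le_trans t0 t_le_b.
rewrite ge_min; apply/orP; right; rewrite -(opprK e) !(powRN _ (- e)) lef_pV2 ?posrE ?powR_gt0 //.
by apply: ge0_ler_powR t_le_b; rewrite ?nnegrE ?oppr_ge0 ltW.
Qed.

Lemma powR_comparable_le (R : realType) (C K w w' : R) : 1 <= C -> 0 <= K -> w' < w ->
  exists N : nat, forall a b, N%:R <= a -> a <= C * b -> b <= C * a ->
    K * a `^ (- w) <= b `^ (- w').
Proof.
(* As b / a lies in [1/C, C], b^(-w') >= m a^(-w'), and a^(w - w') eventually exceeds K / m. *)
move=> C1 K0 w'w; have C0 : 0 < C := lt_le_trans ltr01 C1.
pose m := Num.min (C^-1 `^ (- w')) (C `^ (- w')).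
have m0 : 0 < m by rewrite lt_min !powR_gt0 ?invr_gt0.
pose d := w - w'; have d0 : 0 < d by rewrite subr_gt0.
pose N0 := Num.max 1 ((K / m) `^ d^-1).
have N0_ge0 : 0 <= N0 by rewrite le_max ler01.
exists (Num.Def.archi_bound N0) => a b N0a aCb bCa.
have {N0a} : N0 <= a := le_trans (ltW (archi_boundP N0_ge0)) N0a.
rewrite ge_max => /andP[a1 aK]; have a0 : 0 < a := lt_le_trans ltr01 a1.
have b0 : 0 < b by rewrite -(pmulr_rgt0 _ C0) (lt_le_trans a0 aCb).
have ratio : m * a `^ (- w') <= b `^ (- w').
  rewrite -[b in leRHS](divfK (lt0r_neq0 a0)).
  rewrite powRM ?divr_ge0 ?(ltW a0) ?(ltW b0) // ler_pM2r ?powR_gt0 //.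
  apply: powR_ge_min; rewrite ?invr_gt0 // ler_pdivlMr // ler_pdivrMr //.
  by rewrite mulrC ler_pdivrMr // mulrC aCb bCa.
have large : K <= m * a `^ d.
  have Km : 0 <= K / m by rewrite divr_ge0 // ltW.
  rewrite -ler_pdivrMl // mulrC -[K / m]powRr1 // -(mulVf (lt0r_neq0 d0)) powRrM.
  by apply: ge0_ler_powR; rewrite ?nnegrE ?powR_ge0 // ?(ltW d0) ?(ltW a0).
apply: le_trans ratio; rewrite (_ : - w' = - w + d); last by rewrite /d addrA addNr add0r.
rewrite powRD ?(lt0r_neq0 a0) ?implybT //.
by rewrite mulrCA [K * _]mulrC ler_wpM2l ?powR_ge0.
Qed.

Lemma unitmx_coord_bound (F : numFieldType) n (V : 'M[F]_n) : V \in unitmx ->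
  exists2 D : F, 0 <= D & forall (c : 'cV_n) b,
    (forall l, `|(V *m c) l 0| <= b) -> forall j, `|c j 0| <= D * b.
Proof.
move=> VU; pose W := invmx V.
have W_ge0 j : 0 <= \sum_l `|W j l| by apply: sumr_ge0.
exists (\sum_j \sum_l `|W j l|) => [|c b Vcb j]; first exact: sumr_ge0.
have b0 : 0 <= b := le_trans (normr_ge0 _) (Vcb j).
rewrite -[c](mulKmx VU) mxE; apply: le_trans (ler_norm_sum _ _ _) _.
apply: (@le_trans _ _ (\sum_l `|W j l| * b)).
  by apply: ler_sum => l _; rewrite normrM ler_wpM2l.
by rewrite -mulr_suml ler_wpM2r // [leRHS](bigD1 j) //= lerDl sumr_ge0.
Qed.

Lemma size_exp_linear_le (R : nzSemiRingType) (p : {poly R}) j :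
  (size p <= 2)%N -> (size (p ^+ j) <= j.+1)%N.
Proof.
move=> sp; rewrite (leq_trans (size_poly_exp_leq _ _)) // ltnS.
by rewrite -[leqRHS]mul1n leq_mul2r -subn1 leq_subLR orbC sp.
Qed.

(** * Heights of integer polynomials *)

Lemma abs_coef_le_polnorm (P : {poly int}) j : (`|(P`_j)%R| <= polnorm P)%N.
Proof.
rewrite /polnorm; have [jP|Pj] := ltnP j (size P); last by rewrite nth_default.
exact: (@leq_bigmax_cond _ _ (fun i : 'I_(size P) => `|(P`_i)%R|%N) (Ordinal jP)).
Qed.

Lemma polnorm_leP (P : {poly int}) N :
  reflect (forall j, (`|(P`_j)%R| <= N)%N) (polnorm P <= N)%N.
Proof.
apply: (iffP idP) => [PN j|PN]; first exact: leq_trans (abs_coef_le_polnorm P j) PN.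
by apply/bigmax_leqP => i _; apply: PN.
Qed.

Lemma polnorm_eq0 (P : {poly int}) : (polnorm P == 0%N) = (P == 0).
Proof.
apply/idP/eqP => [/eqP P0|->]; last by rewrite -leqn0; apply/polnorm_leP => j; rewrite coef0.
apply/polyP => j; apply/eqP; rewrite coef0 -absz_eq0 -leqn0 -P0.
exact: abs_coef_le_polnorm.
Qed.

Lemma polnorm_gt0 (P : {poly int}) : (0 < polnorm P)%N = (P != 0).
Proof. by rewrite lt0n polnorm_eq0. Qed.

Lemma abs_coef_le_polnorm_int (P : {poly int}) j : `|P`_j| <= (polnorm P)%:Z.
Proof. by rewrite -abszE lez_nat abs_coef_le_polnorm. Qed.

Lemma polnorm_attained (P : {poly int}) : exists j, polnorm P = `|(P`_j)%R|%N.
Proof.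
rewrite /polnorm; case sP: (size P) => [|n].
  by exists 0%N; rewrite big_ord0 nth_default ?sP.
by rewrite (bigop.bigmax_eq_arg ord0) //; eexists.
Qed.

Lemma polnormZ (c : int) (P : {poly int}) : polnorm (c *: P) = (`|c| * polnorm P)%N.
Proof.
apply/eqP; rewrite eqn_leq; apply/andP; split.
  by apply/polnorm_leP => j; rewrite coefZ abszM leq_mul2l abs_coef_le_polnorm orbT.
have [j ->] := polnorm_attained P.
by rewrite -abszM -coefZ abs_coef_le_polnorm.
Qed.

Lemma polnorm_lincomb_le n (P : {poly int}) (A : nat -> {poly int}) :
  (polnorm (\sum_(j < n) P`_j *: A j) <= polnorm P * \sum_(j < n) polnorm (A j))%N.
Proof.
apply/polnorm_leP => m; rewrite -lez_nat abszE coef_sum.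
apply: le_trans (ler_norm_sum _ _ _) _.
rewrite PoszM (big_morph Posz PoszD erefl) mulr_sumr; apply: ler_sum => j _.
by rewrite coefZ normrM ler_pM ?abs_coef_le_polnorm_int.
Qed.

Lemma size_lincomb_le n m (P : {poly int}) (A : nat -> {poly int}) :
  (forall j, (j < n)%N -> (size (A j) <= m)%N) ->
  (size (\sum_(j < n) P`_j *: A j)%R <= m)%N.
Proof.
move=> sA; apply: (big_ind (fun p : {poly int} => size p <= m)%N).
- by rewrite size_poly0.
- by move=> p q sp sq; rewrite (leq_trans (size_polyD _ _)) // geq_max sp.
- by move=> j _; rewrite (leq_trans (size_scale_leq _ _)) ?sA.
Qed.

Lemma finite_polnorm_le n B :
  finite_set [set P : {poly int} | (size P <= n)%N /\ (polnorm P <= B)%N].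
Proof.
pose poly_of (g : {ffun 'I_n.+1 -> 'I_(B + B).+1}) : {poly int} :=
  \poly_(i < n) ((g (inord i) : nat)%:Z - B%:Z).
apply: (@sub_finite_set _ _ (poly_of @` setT)); last exact/finite_image/finite_finset.
move=> P [sP nP].
have PB j : 0 <= P`_j + B%:Z <= (B + B)%N.
  have /(le_trans (abs_coef_le_polnorm_int P j)) : (polnorm P)%:Z <= B%:Z by rewrite lez_nat.
  rewrite ler_norml => /andP[lo hi].
  by rewrite -lerBlDr sub0r lo PoszD lerD2r hi.
have shift_lt j : (`|(P`_j + B%:Z)%R| < (B + B).+1)%N.
  by case/andP: (PB j) => PB0 PB1; rewrite ltnS -lez_nat abszE ger0_norm.
exists [ffun i : 'I_n.+1 => Ordinal (shift_lt i)] => //.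
apply/polyP => j; rewrite coef_poly; case: ltnP => jn.
  by rewrite ffunE inordK ?ltnS ?(ltnW jn) //= gez0_abs ?addrK //; case/andP: (PB j).
by rewrite nth_default ?(leq_trans sP).
Qed.

Lemma infinite_polnorm_unbounded (A : set {poly int}) n :
  (forall P, A P -> (size P <= n)%N) -> ~ finite_set A ->
  forall B, exists2 P, A P & (B <= polnorm P)%N.
Proof.
move=> sA Ainf B; apply: contrapT => noP; apply: Ainf.
apply: sub_finite_set (finite_polnorm_le n B) => P AP; split; first exact: sA.
by rewrite leqNgt; apply/negP => BP; apply: noP; exists P; rewrite // ltnW.
Qed.

Lemma polnorm_unbounded_infinite (A : set {poly int}) :
  (forall B, exists2 P, A P & (B <= polnorm P)%N) -> ~ finite_set A.
Proof.
move=> Aunb /finite_fsetP [X AX].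
have [P AP] := Aunb (\max_(Q <- finmap.enum_fset X) polnorm Q).+1.
have PX : P \in finmap.enum_fset X by move: AP; rewrite AX.
by rewrite ltnNge (@leq_bigmax_seq _ _ xpredT polnorm P PX).
Qed.

Definition zeval {R : comNzRingType} (x : R) : {rmorphism {poly int} -> R} :=
  horner_eval x \o map_poly intr.

Lemma zevalE (R : comNzRingType) (x : R) P : zeval x P = (map_poly intr P).[x].
Proof. by []. Qed.

Lemma zevalC (R : comNzRingType) (x : R) (c : int) : zeval x c%:P = c%:~R.
Proof. by rewrite zevalE map_polyC hornerC. Qed.

Lemma zevalX (R : comNzRingType) (x : R) : zeval x 'X = x.
Proof. by rewrite zevalE map_polyX hornerX. Qed.

Lemma zevalZ (R : comNzRingType) (x : R) (c : int) P : zeval x (c *: P) = c%:~R * zeval x P.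
Proof. by rewrite -mul_polyC rmorphM zevalC. Qed.

Lemma zeval_coef (R : comNzRingType) (x : R) (P : {poly int}) n : (size P <= n)%N ->
  zeval x P = \sum_(j < n) (P`_j)%:~R * x ^+ j.
Proof.
move=> sP; rewrite zevalE (@horner_coef_wide _ n); last exact: leq_trans (size_poly _ _) sP.
by apply: eq_bigr => j _; rewrite coef_map.
Qed.

Lemma zeval_int (R : numDomainType) (P : {poly int}) (r : int) :
  zeval (r%:~R : R) P = (P.[r])%:~R.
Proof. by rewrite zevalE horner_map. Qed.

Lemma zeval_inj (R : numFieldType) (p q : {poly int}) :
  (forall y : R, y != 0 -> zeval y p = zeval y q) -> p = q.
Proof.
move=> pq; apply: (@map_inj_poly _ _ (intr : int -> R)); first exact: intr_inj; first by [].
apply/eqP; rewrite -subr_eq0; apply/eqP; set d := _ - _.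
apply: (@roots_geq_poly_eq0 _ d [seq i.+1%:R | i <- iota 0 (size d)]).
- apply/allP => _ /mapP [i _ ->]; rewrite /root /d hornerD hornerN.
  by rewrite -!zevalE pq ?subrr // pnatr_eq0.
- by rewrite map_inj_uniq ?iota_uniq // => i j /eqP; rewrite eqr_nat => /eqP [].
- by rewrite size_map size_iota.
Qed.

(** * Approximation exponents *)

Definition approx_polys {R : realType} (lead : bool) (n : nat) (xi w : R) : set {poly int} :=
  [set P : {poly int} | [/\ P != 0, (size P <= n.+1)%N, (lead -> `|(P`_n)%R|%N = polnorm P) &
               `|zeval xi P| <= (polnorm P)%:R `^ (- w)]].

Lemma omega_setE (R : realType) lead n (xi w : R) :
  omega_set lead n xi w = ~ finite_set (approx_polys lead n xi w).
Proof. by []. Qed.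

Lemma approx_le (R : realType) lead n (xi w w' : R) : w' <= w ->
  approx_polys lead n xi w `<=` approx_polys lead n xi w'.
Proof.
move=> w'w P [P0 sP lP Pxi]; split => //; apply: le_trans Pxi _.
by apply: ler_powR; rewrite ?lerN2 // ler1n polnorm_gt0.
Qed.

Lemma omega_lead_le_omega (R : realType) n (xi : R) : (omega_lead n xi <= omega n xi)%E.
Proof.
apply: ereal_sup_le; apply: image_subset => w; rewrite !omega_setE.
by apply: sub_infinite_set => P [].
Qed.

Lemma approx_transfer (R : realType) (k C : nat) (lead : bool) (x y w w' K : R)
    (Q : set {poly int}) (F : {poly int} -> {poly int}) :
  (0 < C)%N -> 0 <= K -> w' < w ->
  (forall P, approx_polys false k x w P -> Q P ->
     [/\ (size (F P) <= k.+1)%N, (lead -> `|((F P)`_k)%R|%N = polnorm (F P)),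
         (polnorm P <= C * polnorm (F P))%N, (polnorm (F P) <= C * polnorm P)%N &
         `|zeval y (F P)| <= K * `|zeval x P|]) ->
  ~ finite_set (approx_polys false k x w `&` Q) -> omega_set lead k y w'.
Proof.
move=> C0 K0 w'w FP Qinf.
have C1 : 1 <= C%:R :> R by rewrite ler1n.
have [N HN] := powR_comparable_le C1 K0 w'w.
rewrite omega_setE; apply: polnorm_unbounded_infinite => B.
have sQ P : (approx_polys false k x w `&` Q) P -> (size P <= k.+1)%N by case=> -[].
have [P [Px QP]] := infinite_polnorm_unbounded sQ Qinf (maxn N (C * B)).
rewrite geq_max => /andP[NP CBP]; have [sFP lFP PFP FPP FPy] := FP P Px QP.
have [P0 _ _ Pxw] := Px.
have FP0 : F P != 0.
  by rewrite -polnorm_gt0 -(ltn_pmul2l C0) muln0 (leq_trans _ PFP) ?polnorm_gt0.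
exists (F P); last by rewrite -(leq_pmul2l C0) (leq_trans CBP).
split => //; apply: le_trans FPy _; apply: le_trans (HN (polnorm P)%:R _ _ _ _).
- exact: ler_wpM2l.
- by rewrite ler_nat.
- by rewrite -natrM ler_nat.
- by rewrite -natrM ler_nat.
Qed.

Definition dominated_at (L : nat) (r : int) : set {poly int} :=
  [set P | (polnorm P <= L * `|(P.[r])%R|)%N].

Lemma dominated_at_some_node k (r : 'I_k.+1 -> int) : injective r ->
  exists L : nat, forall P : {poly int}, (size P <= k.+1)%N -> exists i, dominated_at L (r i) P.
Proof.
move=> r_inj; pose V : 'M[rat]_k.+1 := \matrix_(i, j) (r i)%:~R ^+ j.
have VU : V \in unitmx.
  have -> : V = (Vandermonde k.+1 (\row_i (r i)%:~R))^T by apply/matrixP => i j; rewrite !mxE.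
  rewrite unitmxE det_tr det_Vandermonde unitfE; apply/prodf_neq0 => i _.
  apply/prodf_neq0 => j ij; rewrite !mxE subr_eq0 eqr_int.
  by apply: contraTneq ij => /r_inj ->; rewrite ltnn.
have [D D0 VD] := unitmx_coord_bound VU.
exists (Num.Def.archi_bound D) => P sP.
have [i _ imax] := @arg_maxnP _ ord0 xpredT (fun i => `|(P.[r i])%R|%N) isT.
exists i; apply/polnorm_leP => j; have [jk|kj] := ltnP j k.+1; last first.
  by rewrite nth_default ?(leq_trans sP kj).
pose c : 'cV[rat]_k.+1 := \col_j (P`_j)%:~R.
have Vc l : (V *m c) l 0 = (P.[r l])%:~R.
  rewrite mxE (horner_coef_wide _ sP) rmorph_sum /=.
  by apply: eq_bigr => m _; rewrite !mxE rmorphM rmorphXn mulrC.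
have Vc_le l : `|(V *m c) l 0| <= `|(P.[r i])%R|%:R.
  by rewrite Vc -intr_norm -natr_absz ler_nat; exact: imax.
have := VD c _ Vc_le (Ordinal jk); rewrite mxE -intr_norm -natr_absz => cj.
rewrite -(ler_nat rat) natrM (le_trans cj) // ler_wpM2r //.
by rewrite (le_trans (ltW (archi_boundP D0))) // ler_nat.
Qed.

(** * Moebius substitutions *)

(* For deg P <= k: [revshift k r P] is X^k P(r + 1/X), [dilate k M p] is p(M X), and
   [unshift k M r Q] is (M (X - r))^k Q(1/(M (X - r))). *)
Definition revshift_basis (k : nat) (r : int) (j : nat) : {poly int} :=
  (r%:P * 'X + 1) ^+ j * 'X^(k - j).

Definition revshift (k : nat) (r : int) (P : {poly int}) : {poly int} :=
  \sum_(j < k.+1) P`_j *: revshift_basis k r j.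

Definition revshift_norm (k : nat) (r : int) : nat :=
  \sum_(j < k.+1) polnorm (revshift_basis k r j).

Definition dilate (k M : nat) (p : {poly int}) : {poly int} :=
  \poly_(m < k.+1) ((M ^ m)%N%:Z * p`_m).

Definition unshift_basis (k M : nat) (r : int) (m : nat) : {poly int} :=
  ((M%:Z)%:P * ('X - r%:P)) ^+ (k - m).

Definition unshift (k M : nat) (r : int) (Q : {poly int}) : {poly int} :=
  \sum_(m < k.+1) Q`_m *: unshift_basis k M r m.

Definition unshift_norm (k M : nat) (r : int) : nat :=
  \sum_(m < k.+1) polnorm (unshift_basis k M r m).

Lemma size_shift_linear (r : int) : (size (r%:P * 'X + 1 : {poly int})%R <= 2)%N.
Proof. by rewrite -polyC1 size_MXaddC; case: ifP => // _; rewrite ltnS size_polyC leq_b1. Qed.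

Lemma coef_shift_linear_exp (r : int) j : ((r%:P * 'X + 1) ^+ j)`_j = r ^+ j.
Proof.
elim: j => [|j IHj]; first by rewrite !expr0 coef1.
rewrite exprSr mulrDr mulr1 coefD mulrA coefMX /= coefMC IHj exprSr.
by rewrite [X in _ + X]nth_default ?addr0 // size_exp_linear_le // size_shift_linear.
Qed.

Lemma size_revshift k r P : (size (revshift k r P) <= k.+1)%N.
Proof.
apply: size_lincomb_le => j jk; rewrite /revshift_basis (leq_trans (size_polyMleq _ _)) //.
have sj := size_exp_linear_le j (size_shift_linear r).
rewrite size_polyXn addnS /= (leq_trans (leq_add sj (leqnn _))) //.
by rewrite addSn subnKC // -ltnS.
Qed.

Lemma coef_revshift k r (P : {poly int}) : (size P <= k.+1)%N -> (revshift k r P)`_k = P.[r].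
Proof.
move=> sP; rewrite coef_sum (horner_coef_wide _ sP); apply: eq_bigr => j _.
have jk : (j <= k)%N by rewrite -ltnS.
by rewrite coefZ coefMXn ltnNge leq_subr subKn //= coef_shift_linear_exp.
Qed.

Lemma zeval_revshift (R : fieldType) k r (P : {poly int}) (z : R) :
  (size P <= k.+1)%N -> z != 0 -> zeval z (revshift k r P) = z ^+ k * zeval (r%:~R + z^-1) P.
Proof.
move=> sP z0; rewrite (zeval_coef _ sP) mulr_sumr rmorph_sum; apply: eq_bigr => j _.
rewrite zevalZ /revshift_basis rmorphM !rmorphXn rmorphD rmorphM zevalC zevalX rmorph1.
have -> : r%:~R * z + 1 = z * (r%:~R + z^-1) by rewrite mulrDr mulfV // mulrC.
have jk : (j <= k)%N by rewrite -ltnS.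
have -> : z ^+ k = z ^+ j * z ^+ (k - j) by rewrite -exprD subnKC.
rewrite exprMn.
ring.
Qed.

Lemma polnorm_revshift k r P : (polnorm (revshift k r P) <= polnorm P * revshift_norm k r)%N.
Proof. exact: polnorm_lincomb_le. Qed.

Lemma size_dilate k M p : (size (dilate k M p) <= k.+1)%N.
Proof. exact: size_poly. Qed.

Lemma zeval_dilate (R : comNzRingType) k M (p : {poly int}) (y : R) :
  (size p <= k.+1)%N -> zeval y (dilate k M p) = zeval (M%:R * y) p.
Proof.
move=> sp; rewrite (zeval_coef _ (size_dilate _ _ _)) (zeval_coef _ sp).
apply: eq_bigr => m _; rewrite coef_poly ltn_ord intrM -[_%:~R]/(_%:R) natrX.
by rewrite exprMn mulrCA mulrA.
Qed.

Lemma polnorm_dilate k M p : (0 < M)%N -> (polnorm (dilate k M p) <= M ^ k * polnorm p)%N.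
Proof.
move=> M0; apply/polnorm_leP => m; rewrite coef_poly; case: ltnP => // mk.
by rewrite abszM leq_mul ?leq_pexp2l ?abs_coef_le_polnorm // -ltnS.
Qed.

Lemma size_unshift k M r Q : (size (unshift k M r Q) <= k.+1)%N.
Proof.
apply: size_lincomb_le => m mk; rewrite /unshift_basis.
rewrite (leq_trans (size_exp_linear_le _ _)) ?ltnS ?leq_subr //.
by rewrite (leq_trans (size_polyMleq _ _)) // size_XsubC addnS /= addn1 ltnS size_polyC leq_b1.
Qed.

Lemma zeval_unshift (R : fieldType) k M r (Q : {poly int}) (x : R) :
  (size Q <= k.+1)%N -> M%:R * (x - r%:~R) != 0 ->
  zeval x (unshift k M r Q) = (M%:R * (x - r%:~R)) ^+ k * zeval (M%:R * (x - r%:~R))^-1 Q.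
Proof.
move=> sQ; set u := M%:R * (x - r%:~R) => u0.
rewrite (zeval_coef _ sQ) mulr_sumr rmorph_sum; apply: eq_bigr => m _.
rewrite zevalZ /unshift_basis rmorphXn rmorphM rmorphB zevalX !zevalC -/u.
have mk : (m <= k)%N by rewrite -ltnS.
have -> : u ^+ k = u ^+ (k - m) * u ^+ m by rewrite -exprD subnK.
by rewrite exprVn mulrCA -mulrA mulfV ?mulr1 // expf_neq0.
Qed.

Lemma polnorm_unshift k M r Q : (polnorm (unshift k M r Q) <= polnorm Q * unshift_norm k M r)%N.
Proof. exact: polnorm_lincomb_le. Qed.

Lemma dilate_revshift_unshift k M r (Q : {poly int}) : (0 < M)%N -> (size Q <= k.+1)%N ->
  dilate k M (revshift k r (unshift k M r Q)) = (M ^ k)%N%:Z *: Q.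
Proof.
move=> M0 sQ; apply: (@zeval_inj rat) => y y0.
have M0' : M%:R != 0 :> rat by rewrite pnatr_eq0 -lt0n.
have My0 : M%:R * y != 0 by rewrite mulf_neq0.
have u : M%:R * (r%:~R + (M%:R * y)^-1 - r%:~R) = y^-1.
  by rewrite addrAC subrr add0r invfM mulrA mulfV // mul1r.
rewrite zeval_dilate ?size_revshift // zeval_revshift ?size_unshift // zevalZ.
rewrite zeval_unshift // u ?invr_eq0 // invrK -[_%:~R]/(_%:R) natrX exprMn exprVn.
by field; rewrite expf_neq0.
Qed.

Lemma polnorm_le_unshift k M r (Q : {poly int}) : (0 < M)%N -> (size Q <= k.+1)%N ->
  (polnorm Q <= revshift_norm k r * polnorm (unshift k M r Q))%N.
Proof.
move=> M0 sQ; have := polnorm_dilate k (revshift k r (unshift k M r Q)) M0.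
rewrite dilate_revshift_unshift // polnormZ absz_nat leq_pmul2l ?expn_gt0 ?M0 //.
by move/leq_trans; apply; rewrite mulnC polnorm_revshift.
Qed.

Lemma coef_dilate_revshift k M r (P : {poly int}) : (size P <= k.+1)%N ->
  (dilate k M (revshift k r P))`_k = (M ^ k)%N%:Z * P.[r].
Proof. by move=> sP; rewrite coef_poly ltnSn coef_revshift. Qed.

Lemma polnorm_dilate_revshift_dominated k M r L (P : {poly int}) :
  (revshift_norm k r * L < M)%N -> (size P <= k.+1)%N -> dominated_at L r P ->
  polnorm (dilate k M (revshift k r P)) = `|((dilate k M (revshift k r P))`_k)%R|%N.
Proof.
move=> ML sP PL; have M0 : (0 < M)%N := leq_ltn_trans (leq0n _) ML.
apply/eqP; rewrite eqn_leq abs_coef_le_polnorm andbT; apply/polnorm_leP => m.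
rewrite coef_dilate_revshift // coef_poly; case: ltnP => [|_]; rewrite ?leq0n //.
rewrite ltnS leq_eqVlt !abszM !absz_nat => /predU1P[-> | mk]; first by rewrite coef_revshift.
apply: (@leq_trans (M ^ m * (polnorm P * revshift_norm k r))).
  by rewrite leq_mul2l (leq_trans (abs_coef_le_polnorm _ _)) ?polnorm_revshift ?orbT.
apply: (@leq_trans (M ^ m * (M * `|(P.[r])%R|))); last first.
  by rewrite mulnA -expnSr leq_mul2r leq_pexp2l ?orbT.
rewrite leq_mul2l; apply/orP; right.
apply: (@leq_trans (L * `|(P.[r])%R| * revshift_norm k r)); first by rewrite leq_mul2r PL orbT.
by rewrite mulnAC leq_mul2r mulnC ltnW ?orbT.
Qed.

Lemma omega_moebius_le (R : realType) k M (r : int) (xi : R) :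
  (0 < M)%N -> xi != r%:~R -> (omega k (M%:R * (xi - r%:~R))^-1 <= omega k xi)%E.
Proof.
move=> M0 xr; apply: ereal_sup_le_of_below => w Sw w' w'w.
set u := M%:R * (xi - r%:~R).
have u0 : u != 0 by rewrite mulf_neq0 ?pnatr_eq0 -?lt0n ?subr_eq0.
pose C := (revshift_norm k r + unshift_norm k M r).+1.
have Sw_all : ~ finite_set (approx_polys false k u^-1 w `&` setT) by rewrite setIT.
apply: (approx_transfer (C := C) (K := `|u| ^+ k) (F := unshift k M r) _ _ w'w _ Sw_all) => //.
move=> Q [_ sQ _ _] _; split => //; first exact: size_unshift.
- rewrite (leq_trans (polnorm_le_unshift r M0 sQ)) // leq_mul2r.
  by rewrite ltnW ?ltnS ?leq_addr ?orbT.
- rewrite (leq_trans (polnorm_unshift _ _ _ _)) // mulnC leq_mul2r.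
  by rewrite ltnW ?ltnS ?leq_addl ?orbT.
- by rewrite zeval_unshift // normrM normrX.
Qed.

Lemma omega_le_omega_lead_moebius (R : realType) k M L (r : int) (xi : R) :
  (revshift_norm k r * L < M)%N -> xi != r%:~R ->
  (forall w, omega_set false k xi w ->
     ~ finite_set (approx_polys false k xi w `&` dominated_at L r)) ->
  (omega k xi <= omega_lead k (M%:R * (xi - r%:~R))^-1)%E.
Proof.
move=> ML xr dom_inf; apply: ereal_sup_le_of_below => w Sw w' w'w.
have M0 : (0 < M)%N := leq_ltn_trans (leq0n _) ML.
have d0 : xi - r%:~R != 0 by rewrite subr_eq0.
pose C := (L + M ^ k * revshift_norm k r).+1.
apply: (approx_transfer (C := C) (K := `|(xi - r%:~R)^-1| ^+ k)
          (F := fun P => dilate k M (revshift k r P)) _ _ w'w _ (dom_inf w Sw)) => //.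
move=> P [_ sP _ _] PL; have dom := polnorm_dilate_revshift_dominated ML sP PL.
have top : polnorm (dilate k M (revshift k r P)) = (M ^ k * `|(P.[r])%R|)%N.
  by rewrite dom coef_dilate_revshift // abszM absz_nat.
split; first exact: size_dilate.
- by rewrite dom.
- rewrite top (leq_trans PL) // leq_mul ?leq_pmull ?expn_gt0 ?M0 //.
  by rewrite ltnW // ltnS leq_addr.
- rewrite (leq_trans (polnorm_dilate _ _ M0)) //.
  rewrite (leq_trans (leq_mul (leqnn _) (polnorm_revshift _ _ _))) //.
  by rewrite mulnCA mulnC leq_mul2r ltnW ?orbT // ltnS leq_addl.
- rewrite zeval_dilate ?size_revshift //.
  rewrite invfM mulrA mulfV ?pnatr_eq0 -?lt0n // mul1r.
  by rewrite zeval_revshift ?invr_eq0 // invrK addrCA subrr addr0 normrM normrX.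
Qed.

Lemma omega_set_int (R : realType) k (r : int) : (1 <= k)%N -> omega_set false k (r%:~R : R) 1.
Proof.
move=> k1; rewrite omega_setE; apply: polnorm_unbounded_infinite => B.
pose P : {poly int} := B.+1%:Z *: ('X - r%:P).
have PB : (B.+1 <= polnorm P)%N.
  rewrite polnormZ absz_nat leq_pmulr // (leq_trans _ (abs_coef_le_polnorm _ 1)) //.
  by rewrite coefB coefX coefC.
have P0 : P != 0 by rewrite -polnorm_gt0 (leq_trans _ PB).
exists P; last exact: ltnW.
split => //; first by rewrite (leq_trans (size_scale_leq _ _)) // size_XsubC ltnS.
by rewrite zevalZ rmorphB zevalX zevalC subrr mulr0 normr0 powR_ge0.
Qed.

Lemma finite_approx_dominated_int (R : realType) k L (r : int) (w : R) : 1 <= w ->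
  finite_set (approx_polys false k (r%:~R : R) w `&` dominated_at L r).
Proof.
move=> w1; apply: sub_finite_set (finite_polnorm_le k.+1 1) => P [Pw PL].
have [P0 sP _ Pr] := approx_le w1 Pw; split => //; rewrite leqNgt; apply/negP => P1.
suff Pr0 : `|(P.[r])%R|%N = 0%N.
  by move: PL; rewrite /dominated_at /= Pr0 muln0 leqn0 polnorm_eq0 (negPf P0).
apply/eqP; rewrite -leqn0 -ltnS -(ltr_nat R) natr_absz intr_norm -zeval_int.
apply: le_lt_trans Pr _; rewrite powR_inv1 // invf_lt1 ?ltr0n ?(ltnW P1) //.
by rewrite -[1]/(1%:R) ltr_nat.
Qed.

Theorem mainTheorem1 (R : realType) (k : nat) (hk : (1 <= k)%N)
  (r : 'I_k.+1 -> int) (hr : injective r) :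
  exists M : nat, (1 <= M)%N /\
    forall xi : R, exists i : 'I_k.+1,
      (r i)%:~R != xi /\
      (let xii := (M%:R * (xi - (r i)%:~R))^-1 in
       omega_lead k xii = omega k xii /\ omega k xii = omega k xi).
Proof.
have [L Ldom] := dominated_at_some_node hr.
pose M := (\sum_i revshift_norm k (r i) * L).+1.
have ML i : (revshift_norm k (r i) * L < M)%N by rewrite ltnS (bigD1 i) //= leq_addr.
exists M; split => // xi.
have cover w : approx_polys false k xi w `<=` \bigcup_i dominated_at L (r i).
  by move=> P [_ sP _ _]; have [i] := Ldom P sP; exists i.
have [i dom_inf] :=
  infinite_cover_uniform_part ord0 (@approx_le R false k xi) cover (fun w Sw => Sw).
have xi_r : xi != (r i)%:~R.
  apply/eqP => xi_ri; move: (dom_inf 1); rewrite xi_ri.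
  by move/(_ (@omega_set_int R k (r i) hk)); apply; apply: finite_approx_dominated_int.
exists i; split; first by rewrite eq_sym.
have le1 := omega_lead_le_omega k (M%:R * (xi - (r i)%:~R))^-1.
have le2 := omega_moebius_le k (isT : (0 < M)%N) xi_r.
have le3 := omega_le_omega_lead_moebius (ML i) xi_r dom_inf.
by split; apply/eqP; rewrite eq_le ?le1 ?le2 ?(le_trans le2 le3) ?(le_trans le3 le1).
Qed.
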